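(* Let $X,Y$ be independent $\{0,1\}$-valued random variables with distributions $p_X,p_Y$, and let $q_{Z|XY}$ be a channel with finite output alphabet $\mathcal Z$. Let $f:\{0,1\}^2\to\{0,1\}$, $f(u,v)=\max(u,v)$. Suppose that for each $\epsilon\in[0,1]$, $(U_\epsilon,V_\epsilon)$ is a pair of independent $\{0,1\}$-valued random variables, independent of $X$, such that $f(U_\epsilon,V_\epsilon)$ has distribution $p_Y$; for each fixed $(y,u)$, $p_{f(U_\epsilon,V_\epsilon)|U_\epsilon}(y|u)$ is a continuous function of $\epsilon$; and $U_0=0=V_1$, $U_1=f(U_1,V_1)$, $V_0=f(U_0,V_0)$. For each $\epsilon$, let $Y=f(U_\epsilon,V_\epsilon)$ and let $Z$ be generated from $(X,Y)$ through $q_{Z|XY}$ (so the joint distribution is $p_{U_\epsilon}(u)p_{V_\epsilon}(v)p_X(x)\mathbf 1\{y=f(u,v)\}q_{Z|XY}(z|x,y)$). Define $R_1(\epsilon)=I(X;Z|U_\epsilon)$, $R_U(\epsilon)=I(U_\epsilon;Z)$, $R_V(\epsilon)=I(V_\epsilon;Z|U_\epsilon X)$. Then for every $\epsilon\in[0,1]$, $I(XY;Z)=R_1(\epsilon)+R_U(\epsilon)+R_V(\epsilon)$. Moreover, $R_1$ is continuous in $\epsilon$ and its image contains the interval $[I(X;Z),I(X;Z|Y)]$. *)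

From mathcomp Require Import all_boot all_order all_algebra.
From mathcomp Require Import all_classical all_reals all_analysis.
Import Order.TTheory GRing.Theory Num.Theory.
Local Open Scope ring_scope.

Set Implicit Arguments.
Unset Strict Implicit.
Unset Printing Implicit Defensive.

Definition is_pmf (R : realType) (T : finType) (p : T -> R) : Prop :=
  (forall t, 0 <= p t) /\ \sum_(t : T) p t = 1.

Definition prob (R : realType) (T : finType) (P : T -> R) (E : pred T) : R :=
  \sum_(t : T | E t) P t.

(* Conditional mutual information I(A;B|C) (in nats) of random variables
   fa, fb, fc defined on the finite sample space T with pmf P:
   I(A;B|C) = E[ log ( P(A,B,C) P(C) / (P(A,C) P(B,C)) ) ]. *)
Definition cmi (R : realType) (T : finType) (P : T -> R)
    (A B C : eqType) (fa : T -> A) (fb : T -> B) (fc : T -> C) : R :=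
  \sum_(t : T) P t *
    ln (prob P [pred s | (fa s == fa t) && (fb s == fb t) && (fc s == fc t)]
        * prob P [pred s | fc s == fc t]
        / (prob P [pred s | (fa s == fa t) && (fc s == fc t)]
           * prob P [pred s | (fb s == fb t) && (fc s == fc t)])).

Definition mi (R : realType) (T : finType) (P : T -> R)
    (A B : eqType) (fa : T -> A) (fb : T -> B) : R :=
  cmi P fa fb (fun _ => tt).

(* f : {0,1}^2 -> {0,1}, f(u,v) = max(u,v)  (booleans: false = 0, true = 1). *)
Definition fmax (u v : bool) : bool := u || v.

Definition jointUVXZ (R : realType) (Z : finType) (pU pV pX : bool -> R)
    (q : bool -> bool -> Z -> R) (t : bool * bool * bool * Z) : R :=
  let '(u, v, x, z) := t in pU u * pV v * pX x * q x (fmax u v) z.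

Definition tU (Z : finType) (t : bool * bool * bool * Z) : bool := t.1.1.1.
Definition tV (Z : finType) (t : bool * bool * bool * Z) : bool := t.1.1.2.
Definition tX (Z : finType) (t : bool * bool * bool * Z) : bool := t.1.2.
Definition tZ (Z : finType) (t : bool * bool * bool * Z) : Z := t.2.

Definition jointXYZ (R : realType) (Z : finType) (pX pY : bool -> R)
    (q : bool -> bool -> Z -> R) (t : bool * bool * Z) : R :=
  let '(x, y, z) := t in pX x * pY y * q x y z.

Definition sX (Z : finType) (t : bool * bool * Z) : bool := t.1.1.
Definition sY (Z : finType) (t : bool * bool * Z) : bool := t.1.2.
Definition sZ (Z : finType) (t : bool * bool * Z) : Z := t.2.

(* p_{f(U,V)|U}(y|u) for U, V independent: P(f(u,V) = y). *)
Definition cond_f_U (R : realType) (pV : bool -> R) (y u : bool) : R :=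
  \sum_(v : bool | fmax u v == y) pV v.

From mathcomp Require Import all_boot all_order all_algebra.
From mathcomp Require Import all_classical all_reals all_analysis.
From mathcomp Require Import ring.
Import Order.TTheory GRing.Theory Num.Theory.
Import numFieldNormedType.Exports.
Local Open Scope ring_scope.
Local Open Scope classical_set_scope.

Set Implicit Arguments.
Unset Strict Implicit.

(* Since Y = f(U,V) is a function of (U,V), the variables (U,V,X) and Z are
   conditionally independent given (X,Y); two chain rules then split I(XY;Z)
   into I(U;Z) + I(X;Z|U) + I(V;Z|UX).
   As U is independent of (X,V), R_1 = I(X;Z|U) is the pU-average over u of
   the mutual information J(a) between X and the output of the channel
   a q(.|x,0) + (1-a) q(.|x,1), with a = P(Y=0|U=u), i.e. a = 0 for u = 1 and
   a = pV(0) for u = 0.  Because pY(0) = pU(0) pV(0), this reads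
   R_1 = J(0) + pY(0)/pV(0) (J(pV(0)) - J(0)), which is continuous in e since
   J is (t ln t is continuous at 0) and pV(0) is.  At e = 0 the variable U is
   a.s. 0 and at e = 1 it is a.s. Y, so R_1 runs from I(X;Z) to I(X;Z|Y) and
   the intermediate value theorem concludes. *)

Section ConditionalMutualInformation.
Variables (R : realType) (T : finType) (P : T -> R).
Hypothesis P_ge0 : forall t, 0 <= P t.

Lemma prob_gt0 {E : pred T} {t : T} : 0 < P t -> E t -> 0 < prob P E.
Proof.
move=> Pt Et; apply: lt_le_trans Pt _; rewrite /prob (bigD1 t) //= lerDl.
exact: sumr_ge0.
Qed.

Lemma eq_prob_support (E E' : pred T) :
  (forall s, 0 < P s -> E s = E' s) -> prob P E = prob P E'.
Proof.
move=> EE'; rewrite /prob big_mkcond [RHS]big_mkcond; apply: eq_bigr => s _.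
have [Ps0|Psn] := eqVneq (P s) 0; first by rewrite Ps0 !if_same.
by rewrite EE' // lt_def Psn P_ge0.
Qed.

Definition same_partition {A B : eqType} (f : T -> A) (g : T -> B) :=
  forall s t, 0 < P s -> 0 < P t -> (f s == f t) = (g s == g t).

Lemma cmi_congr {A A' B B' C C' : eqType} (fa : T -> A) (fa' : T -> A')
    (fb : T -> B) (fb' : T -> B') (fc : T -> C) (fc' : T -> C') :
  same_partition fa fa' -> same_partition fb fb' -> same_partition fc fc' ->
  cmi P fa fb fc = cmi P fa' fb' fc'.
Proof.
move=> ha hb hc; rewrite /cmi; apply: eq_bigr => t _.
have [Pt0|Pt] := eqVneq (P t) 0; first by rewrite Pt0 !mul0r.
have {}Pt : 0 < P t by rewrite lt_def Pt P_ge0.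
by congr (_ * ln (_ * _ / (_ * _))); apply: eq_prob_support => s Ps /=;
  rewrite ?ha ?hb ?hc.
Qed.

Lemma cmi_chain {A B W C : eqType} (fa : T -> A) (fb : T -> B) (fw : T -> W)
    (fc : T -> C) :
  cmi P (fun t => (fa t, fb t)) fw fc =
  cmi P fa fw fc + cmi P fb fw (fun t => (fc t, fa t)).
Proof.
rewrite /cmi -big_split; apply: eq_bigr => t _ /=.
have [Pt0|Pt] := eqVneq (P t) 0; first by rewrite Pt0 !mul0r addr0.
have {}Pt : 0 < P t by rewrite lt_def Pt P_ge0.
have pos (E : pred T) : E t -> 0 < prob P E := fun Et => prob_gt0 Pt Et.
rewrite -mulrDr -lnM ?posrE; last 2 first.
1,2: by rewrite divr_gt0 ?mulr_gt0 ?pos //= ?eqxx.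
congr (_ * ln _).
set abwc := prob P _; set c := prob P _; set abc := prob P _; set wc := prob P _.
set awc := prob P _; set ac := prob P _.
set bwac := prob P _; set ca := prob P _; set bac := prob P _; set wac := prob P _.
have -> : bwac = abwc by apply: eq_bigl => s; rewrite /= !xpair_eqE; do !case: (_ == _).
have -> : ca = ac by apply: eq_bigl => s; rewrite /= !xpair_eqE andbC.
have -> : bac = abc by apply: eq_bigl => s; rewrite /= !xpair_eqE; do !case: (_ == _).
have -> : wac = awc by apply: eq_bigl => s; rewrite /= !xpair_eqE; do !case: (_ == _).
by field; rewrite !gt_eqF ?pos //= ?eqxx.
Qed.

(* Conditioning on [(tt, fa t)] gives events convertible to those of [fa]. *)
Lemma mi_chain {A B W : eqType} (fa : T -> A) (fb : T -> B) (fw : T -> W) :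
  mi P (fun t => (fa t, fb t)) fw = mi P fa fw + cmi P fb fw fa.
Proof. by rewrite /mi cmi_chain. Qed.

Lemma cmi_eq0 {A B C : eqType} (fa : T -> A) (fb : T -> B) (fc : T -> C) :
  (forall t, 0 < P t ->
    prob P [pred s | (fa s == fa t) && (fb s == fb t) && (fc s == fc t)]
      * prob P [pred s | fc s == fc t] =
    prob P [pred s | (fa s == fa t) && (fc s == fc t)]
      * prob P [pred s | (fb s == fb t) && (fc s == fc t)]) ->
  cmi P fa fb fc = 0.
Proof.
move=> indep; apply: big1 => t _.
have [->|Pt] := eqVneq (P t) 0; first by rewrite mul0r.
have {}Pt : 0 < P t by rewrite lt_def Pt P_ge0.
by rewrite indep // divff ?ln1 ?mulr0 // mulf_neq0 // gt_eqF // (prob_gt0 Pt) //= !eqxx.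
Qed.
End ConditionalMutualInformation.

Section PushPmf.
Variables (R : realType) (T T' : finType) (P : T -> R) (g : T -> T').

Definition push_pmf (t' : T') : R := \sum_(t | g t == t') P t.

Lemma prob_push_pmf (E : pred T') :
  prob push_pmf E = prob P [pred t | E (g t)].
Proof.
rewrite /prob (partition_big g E) //; apply: eq_bigr => t' Et'.
by apply: eq_bigl => t /=; case: eqP => [->|]; rewrite ?Et' ?andbF.
Qed.

Lemma cmi_push_pmf {A B C : eqType} (fa : T' -> A) (fb : T' -> B)
    (fc : T' -> C) :
  cmi push_pmf fa fb fc = cmi P (fa \o g) (fb \o g) (fc \o g).
Proof.
rewrite /cmi [RHS](partition_big g xpredT) //; apply: eq_bigr => t' _.
rewrite !prob_push_pmf /push_pmf mulr_suml.
by apply: eq_bigr => t /eqP <-.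
Qed.
End PushPmf.

Section XlnX.
Variable R : realType.

Definition xlnx (t : R) : R := t * ln t.

Lemma normr_xlnx_le t : 0 < t <= 1 -> `|xlnx t| <= 2 * Num.sqrt t.
Proof.
move=> /andP[t_gt0 t_le1]; set s := Num.sqrt t.
have s_gt0 : 0 < s by rewrite sqrtr_gt0.
have tE : t = s ^+ 2 by rewrite sqr_sqrtr // ltW.
rewrite /xlnx ler0_norm; last exact: mulr_ge0_le0 (ltW t_gt0) (ln_le0 t_le1).
have lns : - ln s <= s^-1.
  by rewrite -lnV ?posrE //; apply/ltW/ln_sublinear; rewrite invr_gt0.
rewrite tE lnXn //.
have -> : - (s ^+ 2 * (ln s *+ 2)) = 2 * s ^+ 2 * (- ln s) by ring.
have -> : 2 * s = 2 * s ^+ 2 * s^-1 by field; rewrite gt_eqF.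
by rewrite ler_pM2l // mulr_gt0 // exprn_gt0.
Qed.

Lemma continuous_xlnx : continuous xlnx.
Proof.
move=> x; have [x_lt0|x_gt0|->] := ltrgtP x 0.
- have xlnx_near0 : \forall t \near x, xlnx t = 0.
    near=> t; rewrite /xlnx ln0 ?mulr0 //; apply: ltW; near: t.
    exact: lt_nbhsl.
  rewrite /continuous_at (nbhs_singleton xlnx_near0).
  apply: cvg_trans (near_eq_cvg _) (cvg_cst _).
  by near=> t; symmetry; near: t; exact: xlnx_near0.
- exact: continuousM cvg_id (continuous_ln x_gt0).
- rewrite /continuous_at; have -> : xlnx 0 = 0 by rewrite /xlnx mul0r.
  apply/cvgr0Pnorm_lt => e e_gt0.
  have e2_gt0 : 0 < e / 2 by rewrite divr_gt0.
  near=> t; have [t_le0|t_gt0] := leP t 0.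
    by rewrite /xlnx ln0 // mulr0 normr0.
  have t_small : t < Num.min 1 ((e / 2) ^+ 2).
    by near: t; apply: lt_nbhsl; rewrite lt_min ltr01 exprn_gt0.
  move: t_small; rewrite lt_min => /andP[/ltW t_le1 t_lt].
  apply: le_lt_trans (normr_xlnx_le _) _; first by rewrite t_gt0.
  rewrite -ltr_pdivlMl // mulrC -(gtr0_norm e2_gt0) -sqrtr_sqr ltr_sqrt ?exprn_gt0 //.
Unshelve. all: by end_near.
Qed.
End XlnX.

Section ChannelInformation.
Variables (R : realType) (X Z : finType) (pX : X -> R).

Definition mi_chan (W : X -> Z -> R) : R :=
  \sum_x \sum_z pX x * W x z * ln (W x z / \sum_x' pX x' * W x' z).

Hypothesis pX_ge0 : forall x, 0 <= pX x.

Lemma mi_chanE (W : X -> Z -> R) : (forall x z, 0 <= W x z) ->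
  mi_chan W =
  \sum_z (\sum_x pX x * xlnx (W x z) - xlnx (\sum_x pX x * W x z)).
Proof.
move=> W_ge0; rewrite /mi_chan exchange_big; apply: eq_bigr => z _ /=.
set M := \sum_x pX x * W x z.
rewrite {2}/xlnx mulr_suml -sumrB; apply: eq_bigr => x _.
have [->|pX0] := eqVneq (pX x) 0; first by rewrite !mul0r subrr.
have [->|W0] := eqVneq (W x z) 0; first by rewrite /xlnx !(mul0r, mulr0) subrr.
have pX_gt0 : 0 < pX x by rewrite lt_def pX0 pX_ge0.
have W_gt0 : 0 < W x z by rewrite lt_def W0 W_ge0.
have M_gt0 : 0 < M.
  apply: lt_le_trans (mulr_gt0 pX_gt0 W_gt0) _.
  by rewrite /M (bigD1 x) //= lerDl sumr_ge0 // => y _; rewrite mulr_ge0.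
by rewrite /xlnx lnM ?posrE ?invr_gt0 // lnV ?posrE //; ring.
Qed.

Lemma mi_chan_continuous (T : topologicalType) (A : set T)
    (W : T -> X -> Z -> R) :
  (forall a, A a -> forall x z, 0 <= W a x z) ->
  (forall x z, {within A, continuous (fun a => W a x z)}) ->
  {within A, continuous (fun a => mi_chan (W a))}.
Proof.
move=> W_ge0 W_cont.
apply: (@subspace_eq_continuous _ _ _ (fun a =>
    \sum_z (\sum_x pX x * xlnx (W a x z) - xlnx (\sum_x pX x * W a x z)))).
  move=> a; rewrite inE => Aa.
  by rewrite /from_subspace mi_chanE // => x z; exact: W_ge0.
have sum_cont (I : finType) (F : I -> subspace A -> R) :
    (forall i, continuous (F i)) -> continuous (fun a => \sum_i F i a).
  by move=> F_cont; apply: (continuous_big add_continuous) => i _; exact: F_cont.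
have xlnx_cont (f : subspace A -> R) a :
    {for a, continuous f} -> {for a, continuous (fun b => xlnx (f b))}.
  by move=> f_cont; exact: continuous_comp f_cont (@continuous_xlnx _ _).
apply: (sum_cont _) => z a; apply: cvgB.
  apply: (sum_cont _) => x {}a; apply: cvgM; first exact: cvg_cst.
  exact: xlnx_cont (W_cont x z a).
apply: (xlnx_cont (fun b => \sum_x pX x * W b x z)).
by apply: (sum_cont _) => x {}a; apply: cvgM; [exact: cvg_cst | exact: W_cont].
Qed.
End ChannelInformation.

Section BinaryMixture.
Variables (R : realType) (X Z : finType) (pX : X -> R) (q : X -> bool -> Z -> R).
Hypotheses (pX_ge0 : forall x, 0 <= pX x) (q_ge0 : forall x y z, 0 <= q x y z).

Definition mix (a : R) (x : X) (z : Z) : R :=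
  a * q x false z + (1 - a) * q x true z.

Lemma mi_chan_mix_continuous (T : topologicalType) (A : set T) (a : T -> R) :
  (forall t, A t -> 0 <= a t <= 1) -> {within A, continuous a} ->
  {within A, continuous (fun t => mi_chan pX (mix (a t)))}.
Proof.
move=> a01 a_cont; apply: mi_chan_continuous => //.
  move=> t /a01 /andP[a_ge0 a_le1] x z.
  by rewrite addr_ge0 ?mulr_ge0 ?subr_ge0.
move=> x z t; apply: cvgD; apply: cvgM; try exact: cvg_cst.
  exact: a_cont.
exact: cvgB (cvg_cst _) (a_cont t).
Qed.
End BinaryMixture.

Lemma pmf_bool_true (R : realType) (p : bool -> R) :
  is_pmf p -> p true = 1 - p false.
Proof. by case=> _; rewrite big_bool => <-; rewrite addrK. Qed.

Section JointUVXZ.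
Context {R : realType} {Z : finType} {pU pV pX : bool -> R}.
Context {q : bool -> bool -> Z -> R}.
Hypothesis pU_ge0 : forall u, 0 <= pU u.
Hypotheses (pV_pmf : is_pmf pV) (pX_pmf : is_pmf pX).
Hypothesis q_pmf : forall x y, is_pmf (q x y).

Local Notation P := (jointUVXZ pU pV pX q).

Lemma jointUVXZ_ge0 t : 0 <= P t.
Proof.
case: t => [[[u v] x] z] /=.
by rewrite !mulr_ge0 ?(proj1 pV_pmf) ?(proj1 pX_pmf) ?(proj1 (q_pmf _ _)).
Qed.

Lemma big_uvxz (F : bool * bool * bool * Z -> R) :
  \sum_t F t = \sum_u \sum_v \sum_x \sum_z F (u, v, x, z).
Proof. by rewrite !pair_big; apply: eq_bigr => -[[[]]]. Qed.

Lemma prob_jointUVXZ (E : pred (bool * bool * bool * Z)) :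
  prob P E = \sum_u \sum_v \sum_x
    pU u * pV v * pX x * \sum_(z | E (u, v, x, z)) q x (fmax u v) z.
Proof.
rewrite /prob big_mkcond big_uvxz; do 3!(apply: eq_bigr => ? _).
by rewrite mulr_sumr [RHS]big_mkcond; apply: eq_bigr => z _; case: ifP; rewrite ?mulr0.
Qed.

Lemma prob_jointUVXZ_eqZ (a : bool -> bool -> bool -> bool) (z : Z)
    (E : pred (bool * bool * bool * Z)) :
  (forall u v x z', E (u, v, x, z') = a u v x && (z' == z)) ->
  prob P E = \sum_u \sum_v \sum_x
    (if a u v x then pU u * pV v * pX x * q x (fmax u v) z else 0).
Proof.
move=> Ea; rewrite prob_jointUVXZ; do 3!(apply: eq_bigr => ? _).
under eq_bigl do rewrite Ea.
by case: ifP => _; rewrite ?big_pred1_eq ?big_pred0_eq ?mulr0.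
Qed.
Arguments prob_jointUVXZ_eqZ a z {E}.

Lemma prob_jointUVXZ_anyZ (a : bool -> bool -> bool -> bool)
    (E : pred (bool * bool * bool * Z)) :
  (forall u v x z', E (u, v, x, z') = a u v x) ->
  prob P E = \sum_u \sum_v \sum_x (if a u v x then pU u * pV v * pX x else 0).
Proof.
move=> Ea; rewrite prob_jointUVXZ; do 3!(apply: eq_bigr => ? _).
under eq_bigl do rewrite Ea.
by case: ifP => _; rewrite ?big_pred0_eq ?mulr0 // (proj2 (q_pmf _ _)) mulr1.
Qed.
Arguments prob_jointUVXZ_anyZ a {E}.

(* Both sides of each event equation are the same conjunction of atomic
   equalities; [simpl] leaves closed boolean equalities such as [false == true]
   unreduced, hence the rewriting with [eqb_id] and [eqbF_neg]. *)
Local Ltac event_by_atoms :=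
  by move=> ? ? ? ?; rewrite /tU /tV /tX /tZ /= ?xpair_eqE; do !case: (_ == _).
Local Ltac eval_bools :=
  rewrite !big_bool /= ?eqxx ?eqb_id ?eqbF_neg /=.

Lemma cmi_UVX_Z_given_XY :
  cmi P (fun t => (tU t, tV t, tX t)) (@tZ Z)
    (fun t => (tX t, fmax (tU t) (tV t))) = 0.
Proof.
apply: (cmi_eq0 jointUVXZ_ge0) => -[[[u v] x] z] _.
rewrite (prob_jointUVXZ_eqZ (fun u' v' x' =>
  [&& u' == u, v' == v & x' == x] && ((x' == x) && (fmax u' v' == fmax u v))) z);
  last event_by_atoms.
rewrite (prob_jointUVXZ_anyZ (fun u' v' x' =>
  (x' == x) && (fmax u' v' == fmax u v))); last event_by_atoms.
rewrite (prob_jointUVXZ_anyZ (fun u' v' x' =>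
  [&& u' == u, v' == v & x' == x] && ((x' == x) && (fmax u' v' == fmax u v))));
  last event_by_atoms.
rewrite (prob_jointUVXZ_eqZ (fun u' v' x' =>
  (x' == x) && (fmax u' v' == fmax u v)) z); last event_by_atoms.
by case: u; case: v; case: x; eval_bools; ring.
Qed.

Lemma mi_XY_Z_decomposition :
  mi P (fun t => (tX t, fmax (tU t) (tV t))) (@tZ Z) =
  cmi P (@tX Z) (@tZ Z) (@tU Z) + mi P (@tU Z) (@tZ Z) +
  cmi P (@tV Z) (@tZ Z) (fun t => (tU t, tX t)).
Proof.
have P_ge0 := jointUVXZ_ge0.
rewrite -[LHS]addr0 -cmi_UVX_Z_given_XY -(mi_chain P_ge0).
have -> : mi P (fun t => (tX t, fmax (tU t) (tV t), (tU t, tV t, tX t))) (@tZ Z) =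
    mi P (fun t => (tU t, (tX t, tV t))) (@tZ Z).
  apply: (cmi_congr P_ge0) => // -[[[u v] x] z] [[[u' v'] x'] z'] _ _.
  by rewrite /tU /tV /tX /= !xpair_eqE; case: u u' v v' x x' => [] [] [] [] [] [].
by rewrite (mi_chain P_ge0) (cmi_chain P_ge0) addrA [mi _ _ _ + _]addrC.
Qed.

Lemma prob_XZU u x z :
  prob P [pred s | (tX s == x) && (tZ s == z) && (tU s == u)] =
  pU u * pX x * \sum_v pV v * q x (fmax u v) z.
Proof.
rewrite (prob_jointUVXZ_eqZ (fun u' _ x' => (x' == x) && (u' == u)) z);
  last event_by_atoms.
by case: u; case: x; eval_bools; ring.
Qed.

Lemma prob_ZU u z :
  prob P [pred s | (tZ s == z) && (tU s == u)] =
  pU u * \sum_x pX x * \sum_v pV v * q x (fmax u v) z.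
Proof.
rewrite (prob_jointUVXZ_eqZ (fun u' _ _ => u' == u) z); last event_by_atoms.
by case: u; eval_bools; ring.
Qed.

Lemma prob_XU u x : prob P [pred s | (tX s == x) && (tU s == u)] = pU u * pX x.
Proof.
rewrite (prob_jointUVXZ_anyZ (fun u' _ x' => (x' == x) && (u' == u)));
  last event_by_atoms.
by case: u; case: x; eval_bools; rewrite (pmf_bool_true pV_pmf); ring.
Qed.

Lemma prob_U u : prob P [pred s | tU s == u] = pU u.
Proof.
rewrite (prob_jointUVXZ_anyZ (fun u' _ _ => u' == u)); last event_by_atoms.
by case: u; eval_bools; rewrite (pmf_bool_true pV_pmf) (pmf_bool_true pX_pmf); ring.
Qed.

Lemma cmi_X_Z_given_U :
  cmi P (@tX Z) (@tZ Z) (@tU Z) =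
  \sum_u pU u * mi_chan pX (fun x z => \sum_v pV v * q x (fmax u v) z).
Proof.
pose W u x z := \sum_v pV v * q x (fmax u v) z.
pose M u z := \sum_x pX x * W u x z.
transitivity (\sum_t P t * ln (W (tU t) (tX t) (tZ t) / M (tU t) (tZ t))).
  apply: eq_bigr => -[[[u v] x] z] _.
  have [->|Pt] := eqVneq (P (u, v, x, z)) 0; first by rewrite !mul0r.
  have [pU0 pX0] : pU u != 0 /\ pX x != 0.
    by move: Pt; rewrite /= !mulf_eq0 !negb_or => /andP[/andP[/andP[-> _] ->]].
  have {}Pt : 0 < P (u, v, x, z) by rewrite lt_def Pt jointUVXZ_ge0.
  have M0 : M u z != 0.
    have : 0 < prob P [pred s | (tZ s == z) && (tU s == u)].
      by apply: (prob_gt0 jointUVXZ_ge0 Pt); rewrite /= /tZ /tU /= !eqxx.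
    rewrite prob_ZU pmulr_rgt0 => [/lt0r_neq0 //|].
    by rewrite lt_def pU0 pU_ge0.
  rewrite prob_XZU prob_U prob_XU prob_ZU -/(W u x z) -/(M u z).
  by congr (_ * ln _); field; rewrite pU0 pX0 M0.
rewrite big_uvxz; apply: eq_bigr => u _.
rewrite /mi_chan mulr_sumr exchange_big; apply: eq_bigr => x _ /=.
rewrite mulr_sumr exchange_big; apply: eq_bigr => z _ /=.
rewrite /tU /tX /tZ /=; set L := ln _.
by rewrite /W mulr_sumr mulr_suml mulr_sumr; apply: eq_bigr => v _; ring.
Qed.

Lemma cmi_X_Z_given_U_mix :
  cmi P (@tX Z) (@tZ Z) (@tU Z) =
  pU true * mi_chan pX (mix q 0) + pU false * mi_chan pX (mix q (pV false)).
Proof.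
rewrite cmi_X_Z_given_U big_bool /=.
congr (_ * _ + _ * _); congr (mi_chan pX _); apply/funext => x; apply/funext => z;
  by rewrite /mix big_bool /= (pmf_bool_true pV_pmf); ring.
Qed.

Lemma jointUVXZ_supp t : 0 < P t -> pU (tU t) != 0 /\ pV (tV t) != 0.
Proof.
case: t => [[[u v] x] z] /lt0r_neq0.
by rewrite /= !mulf_eq0 !negb_or => /andP[/andP[/andP[-> ->]]].
Qed.

Lemma push_pmf_jointUVXZ {pY : bool -> R} :
  (forall y, \sum_(w : bool * bool | fmax w.1 w.2 == y) pU w.1 * pV w.2 = pY y) ->
  push_pmf P (fun t => (tX t, fmax (tU t) (tV t), tZ t)) = jointXYZ pX pY q.
Proof.
move=> hY; apply/funext => -[[x y] z]; rewrite /jointXYZ -hY.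
rewrite -[LHS]/(prob P _).
rewrite (prob_jointUVXZ_eqZ (fun u v x' => (x' == x) && (fmax u v == y)) z);
  last event_by_atoms.
have -> : \sum_(w : bool * bool | fmax w.1 w.2 == y) pU w.1 * pV w.2 =
    \sum_u \sum_v (if fmax u v == y then pU u * pV v else 0).
  by rewrite pair_bigA big_mkcond.
by case: x; case: y; eval_bools; ring.
Qed.
End JointUVXZ.

Section RateR1.
Variables (R : realType) (Z : finType) (pX pY : bool -> R).
Variables (q : bool -> bool -> Z -> R) (pU pV : R -> bool -> R).
Hypotheses (hX : is_pmf pX) (hq : forall x y, is_pmf (q x y)).
Hypothesis hU : forall e : R, e \in `[0, 1]%R -> is_pmf (pU e).
Hypothesis hV : forall e : R, e \in `[0, 1]%R -> is_pmf (pV e).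
Hypothesis hfY : forall e : R, e \in `[0, 1]%R -> forall y : bool,
  \sum_(w : bool * bool | fmax w.1 w.2 == y) pU e w.1 * pV e w.2 = pY y.
Hypothesis hcont : forall y u : bool,
  {within `[0, 1], continuous (fun e : R => cond_f_U (pV e) y u)}.
Hypotheses (hU0 : pU 0 true = 0) (hV1 : pV 1 true = 0).

Let P e := jointUVXZ (pU e) (pV e) pX q.
Let R1 e := cmi (P e) (@tX Z) (@tZ Z) (@tU Z).
Let J a := mi_chan pX (mix q a).

Lemma pY_false e : e \in `[0, 1]%R -> pY false = pU e false * pV e false.
Proof.
move=> e01; rewrite -(hfY e01) (bigD1 (false, false)) //= big1 ?addr0 //.
by case=> -[] [].
Qed.

(* [pU e false] need not be continuous in [e]; since
   [pY false = pU e false * pV e false], it equals [pY false / pV e false], and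
   when [pV e false = 0] both sides reduce to [J 0] because [x / 0 = 0]. *)
Lemma R1E e : e \in `[0, 1]%R ->
  R1 e = J 0 + pY false / pV e false * (J (pV e false) - J 0).
Proof.
move=> e01; rewrite /R1 /P (cmi_X_Z_given_U_mix (proj1 (hU e01)) (hV e01) hX hq).
rewrite (pmf_bool_true (hU e01)) (pY_false e01) -/(J 0) -/(J _).
have [->|a0] := eqVneq (pV e false) 0; first by rewrite mulr0 mul0r; ring.
by rewrite mulfK //; ring.
Qed.

Lemma R1_continuous : {within `[0, 1], continuous R1}.
Proof.
pose F e := J 0 + pY false / pV e false * (J (pV e false) - J 0).
apply: (@subspace_eq_continuous _ _ _ F).
  by move=> e; rewrite inE => e01; rewrite /from_subspace R1E.
have a_cont : {within `[0, 1], continuous (fun e => pV e false)}.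
  have -> : (fun e => pV e false) = (fun e => cond_f_U (pV e) false false).
    by apply/funext => e; rewrite /cond_f_U big_mkcond big_bool /= add0r.
  exact: hcont.
have [b0|b_neq0] := eqVneq (pY false) 0.
  have -> : F = fun=> J 0 by apply/funext => e; rewrite /F b0 !mul0r addr0.
  exact: cst_continuous.
have J_cont : {within `[0, 1], continuous (fun e => J (pV e false))}.
  apply: mi_chan_mix_continuous => //; first exact: (proj1 hX).
    by move=> x y z; exact: (proj1 (hq x y)).
  move=> e e01; have [pV_ge0 _] := hV e01.
  by rewrite pV_ge0 /= -subr_ge0 -(pmf_bool_true (hV e01)).
rewrite continuous_subspace_in => e; rewrite inE => e01.
have a_neq0 : pV e false != 0.
  by apply: contraNneq b_neq0 => a0; rewrite (pY_false e01) a0 mulr0.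
apply: cvgD; first exact: cvg_cst.
apply: cvgM; first by apply: cvgM; [exact: cvg_cst | exact: cvgV (a_cont e)].
by apply: cvgB (cvg_cst _); exact: J_cont.
Qed.

Let P_ge0 e (e01 : e \in `[0, 1]%R) : forall t, 0 <= P e t :=
  jointUVXZ_ge0 (proj1 (hU e01)) (hV e01) hX hq.

Lemma R1_at0 : R1 0 = mi (jointXYZ pX pY q) (@sX Z) (@sZ Z).
Proof.
have e01 : (0 : R) \in `[0, 1]%R by rewrite in_itv /= lexx ler01.
rewrite /R1 /mi -(push_pmf_jointUVXZ (hfY e01)) cmi_push_pmf.
apply: (cmi_congr (P_ge0 e01)) => // s t /jointUVXZ_supp[+ _] /jointUVXZ_supp[+ _].
by rewrite /tU; case: s.1.1.1; case: t.1.1.1; rewrite ?hU0 ?eqxx.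
Qed.

Lemma R1_at1 : R1 1 = cmi (jointXYZ pX pY q) (@sX Z) (@sZ Z) (@sY Z).
Proof.
have e01 : (1 : R) \in `[0, 1]%R by rewrite in_itv /= lexx ler01.
rewrite /R1 -(push_pmf_jointUVXZ (hfY e01)) cmi_push_pmf.
apply: (cmi_congr (P_ge0 e01)) => // s t /jointUVXZ_supp[_ +] /jointUVXZ_supp[_ +].
by rewrite /tV /sY /= /fmax; case: s.1.1.2; case: t.1.1.2; rewrite ?hV1 ?eqxx // !orbF.
Qed.
End RateR1.

Theorem lemma1 (R : realType) (Z : finType)
  (pX pY : bool -> R) (q : bool -> bool -> Z -> R)
  (pU pV : R -> bool -> R)
  (hX : is_pmf pX) (hY : is_pmf pY)
  (hq : forall x y, is_pmf (q x y))
  (hU : forall e : R, e \in `[0, 1]%R -> is_pmf (pU e))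
  (hV : forall e : R, e \in `[0, 1]%R -> is_pmf (pV e))
  (hfY : forall e : R, e \in `[0, 1]%R -> forall y : bool,
      \sum_(w : bool * bool | fmax w.1 w.2 == y) pU e w.1 * pV e w.2 = pY y)
  (hcont : forall y u : bool,
      {within `[0, 1], continuous (fun e : R => cond_f_U (pV e) y u)})
  (hU0 : pU 0%R true = 0%R)
  (hV1 : pV 1%R true = 0%R)
  (hU1 : \sum_(w : bool * bool | w.1 != fmax w.1 w.2) pU 1%R w.1 * pV 1%R w.2 = 0%R)
  (hV0 : \sum_(w : bool * bool | w.2 != fmax w.1 w.2) pU 0%R w.1 * pV 0%R w.2 = 0%R) :
  let P := fun e => jointUVXZ (pU e) (pV e) pX q in
  let R1 := fun e => cmi (P e) (@tX Z) (@tZ Z) (@tU Z) in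
  let RU := fun e => mi (P e) (@tU Z) (@tZ Z) in
  let RV := fun e => cmi (P e) (@tV Z) (@tZ Z) (fun t => (tU t, tX t)) in
  (forall e : R, e \in `[0, 1]%R ->
     mi (P e) (fun t => (tX t, fmax (tU t) (tV t))) (@tZ Z)
       = (R1 e + RU e + RV e)%R)
  /\ {within `[0, 1], continuous R1}
  /\ (forall r, r \in `[mi (jointXYZ pX pY q) (@sX Z) (@sZ Z),
                        cmi (jointXYZ pX pY q) (@sX Z) (@sZ Z) (@sY Z)]%R ->
        exists2 e, e \in `[0, 1]%R & R1 e = r).
Proof.
move=> P R1 RU RV.
have R1_cont := R1_continuous hX hq hU hV hfY hcont.
split; last split => // r.
  move=> e e01; exact: mi_XY_Z_decomposition (proj1 (hU e e01)) (hV e e01) hX hq.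
rewrite -(R1_at0 hX hq hU hV hfY hU0) -(R1_at1 hX hq hU hV hfY hV1) in_itv /=.
move=> /andP[r_ge r_le]; apply: IVT => //.
by rewrite ge_min r_ge le_max r_le orbT.
Qed.
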